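(* Let $N\ge1$, $r_1,\dots,r_N$ real, $(\mu_{ij})$ an $N\times N$ real matrix and $\Psi_1,\dots,\Psi_N:\mathbb{R}^N\to\mathbb{R}$ such that: $r_i>0$; $(\mu_{ij})$ is nonnegative, symmetric and irreducible; each $\Psi_i$ is locally Lipschitz, $\Psi_i(0)=0$, monotone increasing for the componentwise order; for each $i$ there exist positive $R_i,k_i,c_i$ with $c_i(\sum_jv_j)^{k_i}\le\Psi_i(v)$ for all $v\in[0,\infty)^N$ with $\sum_j|v_j|\ge R_i$; and $\sum_{j=1}^N\mu_{ij}\le r_i/2$ for all $i$. Let $R=\mathrm{diag}(r_1,\dots,r_N)$ and let $M$ be the matrix with $M_{ij}=\mu_{ij}$ for $i\ne j$ and $M_{ii}=\mu_{ii}-\sum_{j=1}^N\mu_{ij}$. For $s\in[0,1]$ let $\Psi_i^s=s\Psi_i+(1-s)\Psi_1$ and $\Xi^s(V)=\mathrm{diag}(\Psi^s_1(V),\dots,\Psi^s_N(V))$. Let $V\in[0,\infty)^N$ be a nonnegative solution of $$(R+M)V=\Xi^s(V)V.$$ Then either $V\equiv0$ or $V_i>0$ for all $i$; and there exist constants $\bar c_1,\bar C_1>0$ independent of $s$ (and of $V$) such that, in the latter case, $\bar c_1\le\sum_iV_i\le\bar C_1$. *)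

From HB Require Import structures.
From mathcomp Require Import all_boot all_order all_algebra.
From mathcomp Require Import all_classical all_reals all_analysis.
Set Implicit Arguments. Unset Strict Implicit. Unset Printing Implicit Defensive.
Import Order.TTheory GRing.Theory Num.Theory.
Local Open Scope ring_scope.

(* local Lipschitz continuity of f : R^N -> R (w.r.t. the l^1 norm;
   all norms on R^N are equivalent) *)
Definition locally_lipschitz {R : realType} {N : nat} (f : ('I_N -> R) -> R) :=
  forall x : 'I_N -> R, exists delta : R, 0 < delta /\ exists L : R,
    forall u v : 'I_N -> R,
      (forall j, `|u j - x j| < delta) -> (forall j, `|v j - x j| < delta) ->
      `|f u - f v| <= L * \sum_j `|u j - v j|.

Definition componentwise_increasing {R : realType} {N : nat}
  (f : ('I_N -> R) -> R) :=
  forall u v : 'I_N -> R, (forall j, u j <= v j) -> f u <= f v.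

Definition irreducible_mx {R : realType} {N : nat} (mu : 'M[R]_N) :=
  forall S : {set 'I_N}, (0 < #|S|)%N -> (#|S| < N)%N ->
    exists i, exists j, [/\ i \in S, j \notin S & mu i j != 0].

Definition Mmat {R : realType} {N : nat} (mu : 'M[R]_N) : 'M[R]_N :=
  \matrix_(i, j) (if i == j then mu i i - \sum_k mu i k else mu i j).

(* Psi^s_i = s Psi_i + (1-s) Psi_1  (Psi_1 is index 0) *)
Definition Psis {R : realType} {N : nat} (Psi : 'I_N.+1 -> ('I_N.+1 -> R) -> R)
  (s : R) (i : 'I_N.+1) (v : 'I_N.+1 -> R) : R :=
  s * Psi i v + (1 - s) * Psi ord0 v.

Definition is_solution {R : realType} {N : nat} (r : 'I_N.+1 -> R)
  (mu : 'M[R]_N.+1) (Psi : 'I_N.+1 -> ('I_N.+1 -> R) -> R) (s : R)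
  (V : 'I_N.+1 -> R) :=
  forall i, r i * V i + \sum_j Mmat mu i j * V j = Psis Psi s i V * V i.

From HB Require Import structures.
From mathcomp Require Import all_boot all_order all_algebra.
From mathcomp Require Import all_classical all_reals all_analysis.
From mathcomp Require Import ring lra.

Set Implicit Arguments.
Unset Strict Implicit.
Unset Printing Implicit Defensive.
Import Order.TTheory GRing.Theory Num.Theory.
Local Open Scope ring_scope.

(* Positivity: if V vanished at some but not all indices, irreducibility would
   give a zero index i coupled to a nonzero index j, while the i-th equation
   reduces to sum_j mu_ij V_j = 0.
   Lower bound: since Psi^s_1 = Psi_1 for every s, the first equation together
   with sum_j mu_1j <= r_1/2 gives Psi_1(V) >= r_1/2, which by Lipschitz
   continuity of Psi_1 at 0 keeps V away from 0.
   Upper bound: M has zero column sums, so summing the equations gives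
   sum_i r_i V_i = sum_i Psi^s_i(V) V_i; the growth of the Psi_i makes the right
   side exceed the left one as soon as sum_i V_i is large. *)

Lemma le_sum_nneg (R : realType) (I : finType) (V : I -> R) j :
  (forall i, 0 <= V i) -> V j <= \sum_i V i.
Proof. by move=> V_ge0; rewrite (bigD1 j) //= lerDl sumr_ge0. Qed.

Lemma lt_convex (R : realType) (s a x y : R) :
  0 <= s <= 1 -> a < x -> a < y -> a < s * x + (1 - s) * y.
Proof.
case/andP=> s_ge0 s_le1 ax ay; have [x_le_y | y_lt_x] := leP x y.
  have : 0 <= (1 - s) * (y - x) by rewrite mulr_ge0 // subr_ge0.
  lra.
have : 0 <= s * (x - y) by rewrite mulr_ge0 // subr_ge0 ltW.
lra.
Qed.

Lemma gt_mul_powR (R : realType) (a c k x : R) :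
  0 <= a -> 0 < c -> 0 < k -> 0 <= x -> (a / c) `^ k^-1 < x -> a < c * x `^ k.
Proof.
move=> a_ge0 c_gt0 k_gt0 x_ge0 lt_x.
have -> : a = c * ((a / c) `^ k^-1) `^ k.
  rewrite -powRrM mulVf ?gt_eqF // powRr1; last by rewrite divr_ge0 // ltW.
  by rewrite mulrC divfK ?gt_eqF.
by rewrite ltr_pM2l // gt0_ltr_powR // nnegrE powR_ge0.
Qed.

Section CouplingMatrix.
Variables (R : realType) (N : nat) (mu : 'M[R]_N).

Lemma Mmat_mulE (V : 'I_N -> R) i :
  \sum_j Mmat mu i j * V j = \sum_j mu i j * V j - (\sum_j mu i j) * V i.
Proof.
rewrite (bigD1 i) //= [X in _ = X - _](bigD1 i) //=.
rewrite (eq_bigr (fun j => mu i j * V j)) => [|j ji]; last first.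
  by rewrite mxE eq_sym (negbTE ji).
by rewrite mxE eqxx; ring.
Qed.

Lemma sum_Mmat_mul (V : 'I_N -> R) :
  mu^T = mu -> \sum_i \sum_j Mmat mu i j * V j = 0.
Proof.
move=> mu_sym; under eq_bigr do rewrite Mmat_mulE.
rewrite sumrB exchange_big /=; apply/eqP; rewrite subr_eq0; apply/eqP.
apply: eq_bigr => j _; rewrite -mulr_suml; congr (_ * _).
by apply: eq_bigr => i _; rewrite -[in LHS]mu_sym mxE.
Qed.

Lemma irreducible_zero_or_pos (V : 'I_N -> R) :
  irreducible_mx mu -> (forall i j, 0 <= mu i j) -> (forall i, 0 <= V i) ->
  (forall i, V i = 0 -> \sum_j mu i j * V j = 0) ->
  V = (fun _ => 0) \/ (forall i, 0 < V i).
Proof.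
move=> mu_irr mu_ge0 V_ge0 zero_closed.
have [V_gt0 | /existsNP [i0 V_i0]] := pselect (forall i, 0 < V i).
  by right.
left; apply/funext => j; apply: contra_notP (V_i0) => Vj_neq0; exfalso.
pose S := [set i | V i == 0].
have S_gt0 : (0 < #|S|)%N.
  apply/card_gt0P; exists i0.
  by rewrite inE eq_le V_ge0 andbT leNgt; apply/negP.
have S_ltN : (#|S| < N)%N.
  rewrite -[X in (_ < X)%N]card_ord -cardsT proper_card // properT.
  by apply/negP => /eqP/setP/(_ j); rewrite !inE => /eqP.
have [i [k [iS kS mu_ik]]] := mu_irr S S_gt0 S_ltN.
move: iS kS; rewrite !inE => /eqP/zero_closed/eqP.
rewrite psumr_eq0 => [|l _]; last exact: mulr_ge0.
move=> /allP/(_ k (mem_index_enum _))/implyP/(_ isT).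
by rewrite mulf_eq0 (negbTE mu_ik) /= => ->.
Qed.

End CouplingMatrix.

Lemma locally_lipschitz_sum_ge (R : realType) (N : nat) (f : ('I_N -> R) -> R)
    (a : R) :
  locally_lipschitz f -> f (fun _ => 0) = 0 -> 0 < a ->
  exists2 c, 0 < c & forall v, (forall j, 0 <= v j) -> a <= f v ->
    c <= \sum_j v j.
Proof.
move=> /(_ (fun _ => 0)) [delta [delta_gt0 [L lipL]]] f0 a_gt0.
exists (Num.min delta (a / (`|L| + 1))) => [|v v_ge0 a_le].
  by rewrite lt_min delta_gt0 divr_gt0 // ltr_wpDl.
have sum_ge0 : 0 <= \sum_j v j by exact: sumr_ge0.
rewrite ge_min; have [near0 | /existsNP [j /negP]] :=
  pselect (forall j, `|v j - 0| < delta); last first.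
  rewrite subr0 ger0_norm // -leNgt => le_vj.
  by rewrite (le_trans le_vj) ?le_sum_nneg.
have zero_near0 (j : 'I_N) : `|0 - 0 : R| < delta by rewrite subrr normr0.
have := lipL v (fun _ => 0) near0 zero_near0.
rewrite f0 subr0 (eq_bigr v) => [lip_v|j _]; last by rewrite subr0 ger0_norm.
have a_le_L : a <= `|L| * \sum_j v j.
  by rewrite (le_trans a_le) // (le_trans (ler_norm _)) // (le_trans lip_v)
    // ler_wpM2r // ler_norm.
rewrite ler_pdivrMr ?ltr_wpDl //; apply/orP; right.
by rewrite mulrDr mulr1 mulrC (le_trans a_le_L) // lerDl.
Qed.

Lemma growth_sum_large (R : realType) (N : nat) (I : finType)
    (Psi : I -> ('I_N -> R) -> R) (a : R) :
  0 <= a ->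
  (forall i, exists Ri ki ci : R, [/\ 0 < Ri, 0 < ki, 0 < ci &
      forall v : 'I_N -> R, (forall j, 0 <= v j) ->
        Ri <= \sum_j `|v j| -> ci * (\sum_j v j) `^ ki <= Psi i v]) ->
  exists2 C, 0 < C & forall v, (forall j, 0 <= v j) -> C < \sum_j v j ->
    forall i, a < Psi i v.
Proof.
move=> a_ge0 growth.
have /fin_all_exists [C C_spec] : forall i, exists c : R, 0 <= c /\
    forall v, (forall j, 0 <= v j) -> c < \sum_j v j -> a < Psi i v.
  move=> i; have [Ri [ki [ci [Ri_gt0 ki_gt0 ci_gt0 grow]]]] := growth i.
  exists (Ri + (a / ci) `^ ki^-1).
  split; first by rewrite addr_ge0 ?powR_ge0 ?ltW.
  move=> v v_ge0 lt_sum; have sum_ge0 : 0 <= \sum_j v j by exact: sumr_ge0.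
  apply: (lt_le_trans _ (grow v v_ge0 _)).
    by rewrite gt_mul_powR // (le_lt_trans _ lt_sum) // lerDr ltW.
  rewrite (eq_bigr v) => [|j _]; last by rewrite ger0_norm.
  by rewrite (le_trans _ (ltW lt_sum)) // lerDl powR_ge0.
exists (1 + \sum_i C i) => [|v v_ge0 lt_sum i].
  by rewrite ltr_wpDr // sumr_ge0 // => i _; case: (C_spec i).
have [_ C_large] := C_spec i; apply: C_large v_ge0 _.
rewrite (le_lt_trans _ lt_sum) // ler_wpDl //.
by rewrite le_sum_nneg // => l; case: (C_spec l).
Qed.

Section Solutions.
Variables (R : realType) (N : nat) (r : 'I_N.+1 -> R) (mu : 'M[R]_N.+1).
Variables (Psi : 'I_N.+1 -> ('I_N.+1 -> R) -> R) (s : R) (V : 'I_N.+1 -> R).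
Hypothesis V_sol : is_solution r mu Psi s V.

Lemma Psis0 v : Psis Psi s ord0 v = Psi ord0 v.
Proof. by rewrite /Psis; ring. Qed.

Lemma solution_zero_closed i : V i = 0 -> \sum_j mu i j * V j = 0.
Proof.
by move=> Vi0; have := V_sol i; rewrite Mmat_mulE Vi0 !mulr0 subr0 add0r.
Qed.

Lemma solution_Psis_ge i :
  (forall j, 0 <= mu i j) -> (forall j, 0 <= V j) -> \sum_j mu i j <= r i / 2 ->
  0 < V i -> r i / 2 <= Psis Psi s i V.
Proof.
move=> mu_ge0 V_ge0 mu_sum Vi_gt0; rewrite -subr_ge0 -(pmulr_lge0 _ Vi_gt0).
have -> : (Psis Psi s i V - r i / 2) * V i =
    \sum_j mu i j * V j + (r i / 2 - \sum_j mu i j) * V i.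
  by rewrite mulrBl -V_sol Mmat_mulE; field.
by rewrite addr_ge0 ?sumr_ge0 // => [j _|]; rewrite mulr_ge0 ?subr_ge0.
Qed.

Lemma solution_balance :
  mu^T = mu -> \sum_i r i * V i = \sum_i Psis Psi s i V * V i.
Proof.
move=> mu_sym; apply/eqP; rewrite eq_sym -subr_eq0 -sumrB.
rewrite (eq_bigr (fun i => \sum_j Mmat mu i j * V j)) ?sum_Mmat_mul // => i _.
by rewrite -V_sol addrC addKr.
Qed.

End Solutions.

Theorem lemma6p1 (R : realType) (N : nat) (r : 'I_N.+1 -> R)
  (mu : 'M[R]_N.+1) (Psi : 'I_N.+1 -> ('I_N.+1 -> R) -> R)
  (hr : forall i, 0 < r i)
  (hmu_nneg : forall i j, 0 <= mu i j)
  (hmu_sym : mu^T = mu)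
  (hmu_irr : irreducible_mx mu)
  (hPsi_lip : forall i, locally_lipschitz (Psi i))
  (hPsi0 : forall i, Psi i (fun _ => 0) = 0)
  (hPsi_mono : forall i, componentwise_increasing (Psi i))
  (hPsi_growth : forall i, exists Ri ki ci : R, [/\ 0 < Ri, 0 < ki, 0 < ci &
      forall v : 'I_N.+1 -> R, (forall j, 0 <= v j) ->
        Ri <= \sum_j `|v j| -> ci * (\sum_j v j) `^ ki <= Psi i v])
  (hmu_sum : forall i, \sum_j mu i j <= r i / 2) :
  (forall (s : R) (V : 'I_N.+1 -> R), 0 <= s <= 1 ->
     (forall i, 0 <= V i) -> is_solution r mu Psi s V ->
     V = (fun _ => 0) \/ (forall i, 0 < V i))
  /\
  (exists c1 C1 : R, [/\ 0 < c1, 0 < C1 &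
     forall (s : R) (V : 'I_N.+1 -> R), 0 <= s <= 1 ->
       (forall i, 0 <= V i) -> is_solution r mu Psi s V ->
       (forall i, 0 < V i) ->
       c1 <= \sum_i V i <= C1]).
Proof.
split=> [s V _ V_ge0 V_sol|].
  exact: irreducible_zero_or_pos (solution_zero_closed V_sol).
have [c1 c1_gt0 lower] := locally_lipschitz_sum_ge (hPsi_lip ord0) (hPsi0 ord0)
  (divr_gt0 (hr ord0) (ltr0Sn _ 1)).
have r_le_sum i : r i <= \sum_j r j by rewrite le_sum_nneg // => j; rewrite ltW.
have [C1 C1_gt0 upper] :=
  growth_sum_large (le_trans (ltW (hr ord0)) (r_le_sum ord0)) hPsi_growth.
exists c1, C1; split=> // s V s01 V_ge0 V_sol V_gt0.
have Psi0_ge : r ord0 / 2 <= Psi ord0 V.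
  by rewrite -(Psis0 Psi s) (solution_Psis_ge V_sol).
rewrite lower //= leNgt; apply/negP => /(upper V V_ge0) Psi_large.
have := solution_balance V_sol hmu_sym; apply/eqP; rewrite lt_eqF //.
apply: ltr_sum => [|i _].
  by apply/hasP; exists ord0; rewrite ?mem_index_enum.
by rewrite ltr_pM2r // (le_lt_trans (r_le_sum i)) // lt_convex.
Qed.
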